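(* Let $2\le k<d+1$ and let $\Delta_k^d=\operatorname{tconv}\{-e_I:I\subseteq[d+1],|I|=k\}\subseteq\mathbb{T}^d$ with $V$ the family of these $\binom{d+1}{k}$ points. Then the set of coarse types of the maximal cells of the tropical complex $\mathcal{C}_V$ is, up to permutation of coordinates by $\operatorname{Sym}(d+1)$, the set of tuples $$\Big(\tbinom{d+1-\alpha}{k}+\tbinom{d}{k-1},\ \tbinom{d-1}{k-1},\ \dots,\ \tbinom{d-(\alpha-1)}{k-1},\ \underbrace{0,\dots,0}_{d+1-\alpha}\Big)$$ for $1\le\alpha\le d+2-k$; that is, the set of coarse types of maximal cells is the union of the $\operatorname{Sym}(d+1)$-orbits of these tuples.
   Context: Tropical arithmetic is min-plus; $\mathbb{T}^d=\mathbb{R}^{d+1}/\mathbb{R}(1,\dots,1)$; $e_I=\sum_{i\in I}e_i$. For $m\in[d+1]$ let $\bar S_m=\{\xi\in\mathbb{T}^d:\xi_m=\min_i\xi_i\}$. For $V=(v_1,\dots,v_n)$ and $x\in\mathbb{T}^d$, $\operatorname{type}_V(x)=(T_1,\dots,T_{d+1})$ with $T_m=\{l:v_l\in x+\bar S_m\}$. The cells $\{x:\operatorname{type}_V(x)=\mathcal{T}\}$ have closures forming a polyhedral subdivision $\mathcal{C}_V$ of $\mathbb{T}^d$ (the tropical complex); maximal cells are the inclusion-maximal ones. The coarse type of a cell is $(|T_1|,\dots,|T_{d+1}|)$ for its relative interior points. *)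

From HB Require Import structures.
From mathcomp Require Import all_boot all_order all_algebra all_fingroup.
From mathcomp Require Import all_classical all_reals all_analysis.
Set Implicit Arguments. Unset Strict Implicit. Unset Printing Implicit Defensive.
Import Order.TTheory GRing.Theory Num.Theory.
Import numFieldNormedType.Exports.
Local Open Scope classical_set_scope.
Local Open Scope ring_scope.

(* Throughout n = d+1; coordinates are indexed by 'I_n = [d+1] (0-based).
   Points of T^d are represented by points of R^n = 'rV[R]_n; every notion
   below is invariant under x |-> x + c(1,...,1), so this is harmless. *)

Definition negeI (R : realType) (n : nat) (I : {set 'I_n}) : 'rV[R]_n :=
  \row_i (- (i \in I)%:R).

Definition labels (n k : nat) : {set {set 'I_n}} := [set I : {set 'I_n} | #|I| == k].

Definition in_sector (R : realType) (n : nat) (x v : 'rV[R]_n) (m : 'I_n) : bool :=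
  [forall i : 'I_n, (v - x) ord0 m <= (v - x) ord0 i].

Definition vtype (R : realType) (n k : nat) (x : 'rV[R]_n)
  : {ffun 'I_n -> {set {set 'I_n}}} :=
  [ffun m => [set I in labels n k | in_sector x (negeI R I) m]].

Definition cell (R : realType) (n k : nat) (T : {ffun 'I_n -> {set {set 'I_n}}})
  : set 'rV[R]_n := [set x | vtype k x = T].

Definition is_closed_cell (R : realType) (n k : nat) (C : set 'rV[R]_n) : Prop :=
  exists T, @cell R n k T !=set0 /\ C = closure (@cell R n k T).

Definition is_maximal_cell (R : realType) (n k : nat) (C : set 'rV[R]_n) : Prop :=
  is_closed_cell k C /\
  forall C' : set 'rV[R]_n, is_closed_cell k C' -> C `<=` C' -> C = C'.

Definition coarse (n : nat) (T : {ffun 'I_n -> {set {set 'I_n}}}) : {ffun 'I_n -> nat} :=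
  [ffun m => #|T m|].

(* the tuple (C(d+1-a,k)+C(d,k-1), C(d-1,k-1), ..., C(d-(a-1),k-1), 0,...,0)
   with n = d+1, written with 0-based index i *)
Definition tuple_alpha (n k a : nat) : {ffun 'I_n -> nat} :=
  [ffun i : 'I_n =>
     if val i == 0%N then ('C(n - a, k) + 'C(n.-1, k.-1))%N
     else if (val i < a)%N then 'C(n.-1 - val i, k.-1)
     else 0%N].

From HB Require Import structures.
From mathcomp Require Import all_boot all_order all_algebra all_fingroup.
From mathcomp Require Import all_classical all_reals all_analysis.
From mathcomp Require Import ring lra zify.
Import numFieldNormedType.Exports.
Set Implicit Arguments. Unset Strict Implicit. Unset Printing Implicit Defensive.
Import Order.TTheory GRing.Theory Num.Theory.
Local Open Scope classical_set_scope.
Local Open Scope ring_scope.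

(* The type of x assigns each k-set I to the coordinates m at which x + e_I is
   maximal.  Call x generic when its coordinates are pairwise distinct and no two
   differ by 1: then every I has a unique such m.  Pushing any point of a cell
   slightly along (0, 1, ..., d) yields a generic point whose cell closure contains
   the original cell, so maximal cells are exactly the closures of cells of
   generic points.  At a generic x with top coordinate t and band
   A = {j | x_j > x_t - 1}, the k-sets of type t are those containing t or
   avoiding A, those of type m in A \ {t} contain m and avoid every coordinate
   above x_m, and no k-set has a type outside A.  Counting gives the tuple for
   alpha = |A| (truncated at d+2-k, beyond which the extra binomials vanish),
   permuted by the rank of the coordinates.  Conversely a staircase point with
   prescribed ranks and band size realises each tuple. *)

Section Perturbation.
Variable R : realType.

Lemma near_right_mul_lt (b c : R) : 0 < b -> 0 <= c ->
  \forall e \near 0^'+, 0 < e /\ e * c < b.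
Proof.
move=> b0 c0; near=> e; split; first by near: e; exact: nbhs_right_gt.
have e0 : 0 < e by near: e; exact: nbhs_right_gt.
have : e < b / (c + 1) by near: e; apply: nbhs_right_lt; rewrite divr_gt0 //; lra.
rewrite ltr_pdivlMr; last lra.
have : e * c <= e * (c + 1) by rewrite ler_pM2l //; lra.
lra.
Unshelve. all: by end_near. Qed.

Lemma near_perturb_le (a b wa wb : R) :
  \forall e \near 0^'+,
    (a + e * wa <= b + e * wb) = (a < b) || (a == b) && (wa <= wb).
Proof.
have [ab|ab|->] := ltgtP a b.
- near=> e; have [e0 ew] : 0 < e /\ e * `|wa - wb| < b - a.
    by near: e; apply: near_right_mul_lt; rewrite ?subr_gt0.
  have : e * (wa - wb) <= e * `|wa - wb| by rewrite ler_pM2l // ler_norm.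
  lra.
- near=> e; have [e0 ew] : 0 < e /\ e * `|wb - wa| < a - b.
    by near: e; apply: near_right_mul_lt; rewrite ?subr_gt0.
  have : e * (wb - wa) <= e * `|wb - wa| by rewrite ler_pM2l // ler_norm.
  lra.
- near=> e; have e0 : 0 < e by near: e; exact: nbhs_right_gt.
  by rewrite lerD2l ler_pM2l ?eqxx.
Unshelve. all: by end_near. Qed.

Lemma near_perturb_neq (p q c : R) : q != 0 -> \forall e \near 0^'+, p + e * q != c.
Proof.
move=> q0; have [<-|pc] := eqVneq p c.
  near=> e; have e0 : 0 < e by near: e; exact: nbhs_right_gt.
  by rewrite -subr_eq0 addrC addKr mulf_eq0 gt_eqF.
near=> e; have [e0 ew] : 0 < e /\ e * `|q| < `|p - c|.
  by near: e; apply: near_right_mul_lt; rewrite ?normr_gt0 ?subr_eq0.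
apply/eqP => epq.
have : `|p - c| = `|e * q| by rewrite -normrN; congr `|_|; lra.
rewrite normrM gtr0_norm //; lra.
Unshelve. all: by end_near. Qed.

Lemma closure_near_right (n : nat) (S : set 'rV[R]_n) x w :
  (\forall e \near 0^'+, S (x + e *: w)) -> closure S x.
Proof.
move=> Sxw B /nbhs_ballP[r r0 rB].
have [e [Se [e0 ew]]] := filter_ex (filterI Sxw (near_right_mul_lt r0 (normr_ge0 w))).
exists (x + e *: w); split => //; apply: rB.
by rewrite -ball_normE /ball_ /= opprD addNKr normrN normrZ gtr0_norm.
Qed.
End Perturbation.

Lemma lex_argmaxE (R : realType) (I : finType) (a b : I -> R) m :
  [forall i, (a i < a m) || (a i == a m) && (b i <= b m)] =
  [forall i, a i <= a m] && [forall j, [forall i, a i <= a j] ==> (b j <= b m)].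
Proof.
apply/forallP/andP => [H|[/forallP am /forallP bm] i].
  split; apply/forallP.
    by move=> i; have /orP[/ltW //|/andP[/eqP -> _]] := H i.
  move=> j; apply/implyP => /forallP /(_ m) jm; have /orP[ij|/andP[_ //]] := H j.
  by move: jm; rewrite leNgt ij.
rewrite lt_neqAle am andbT; have [aim|//] := eqVneq (a i) (a m).
by apply: (implyP (bm i)); apply/forallP => l; rewrite aim.
Qed.

Section Types.
Variables (R : realType) (n k : nat).
Implicit Types (x y w : 'rV[R]_n) (I : {set 'I_n}) (T : {ffun 'I_n -> {set {set 'I_n}}}).

Definition addeI I x (j : 'I_n) : R := x ord0 j + (j \in I)%:R.

Lemma in_sector_negeI x I m :
  in_sector x (negeI R I) m = [forall i, addeI I x i <= addeI I x m].
Proof. by apply/forallP/forallP => H i; move: (H i); rewrite /addeI !mxE; lra. Qed.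

Lemma in_vtype x I m :
  (I \in vtype k x m) = (#|I| == k) && [forall i, addeI I x i <= addeI I x m].
Proof. by rewrite ffunE !inE in_sector_negeI. Qed.

Definition refine_type T w : {ffun 'I_n -> {set {set 'I_n}}} :=
  [ffun m => [set I in T m | [forall j, (I \in T j) ==> (w ord0 j <= w ord0 m)]]].

(* For small e > 0, x + e_I + e w compares coordinates lexicographically by (x + e_I, w). *)
Lemma near_vtype_perturb x w :
  \forall e \near 0^'+, vtype k (x + e *: w) = refine_type (vtype k x) w.
Proof.
have : \forall e \near 0^'+, forall p : {set 'I_n} * 'I_n * 'I_n,
    let: (J, m, i) := p in
    (addeI J x i + e * w ord0 i <= addeI J x m + e * w ord0 m) =
    (addeI J x i < addeI J x m) ||
      (addeI J x i == addeI J x m) && (w ord0 i <= w ord0 m).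
  by apply: filter_forall => -[[J m] i]; apply: near_perturb_le.
apply: filterS => e lex; apply/ffunP => m; apply/setP => I.
rewrite in_vtype ffunE inE in_vtype; case cI: (#|I| == k) => //=.
have -> : [forall i, addeI I (x + e *: w) i <= addeI I (x + e *: w) m] =
          [forall i, (addeI I x i < addeI I x m) ||
                     (addeI I x i == addeI I x m) && (w ord0 i <= w ord0 m)].
  by apply: eq_forallb => i; rewrite -(lex (I, m, i)) /addeI !mxE; congr (_ <= _); lra.
rewrite (lex_argmaxE (addeI I x) (fun i => w ord0 i)); congr (_ && _).
by apply: eq_forallb => j; rewrite in_vtype cI.
Qed.

Lemma cell_subset_closure_refine T w :
  @cell R n k T `<=` closure (@cell R n k (refine_type T w)).
Proof.
move=> x; rewrite /cell /= => xT; apply: (@closure_near_right R n _ x w).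
by apply: filterS (near_vtype_perturb x w) => e /= ->; rewrite xT.
Qed.

Lemma closure_in_sector (S : set 'rV[R]_n) z v m :
  (forall y, S y -> in_sector y v m) -> closure S z -> in_sector z v m.
Proof.
move=> Ssec Sz; apply/forallP => i; rewrite leNgt; apply/negP => gap.
set g := (v - z) ord0 m - (v - z) ord0 i.
have g0 : 0 < g by rewrite subr_gt0.
have [y [Sy [_ /(_ ord0) zy]]] := Sz _ (nbhsx_ballx z (g / 2) (divr_gt0 g0 (ltr0Sn _ 1))).
have := Ssec y Sy => /forallP /(_ i).
by move: (zy m) (zy i) g0; rewrite /g /ball /= !mxE !ltr_norml; lra.
Qed.

Lemma closure_cell_vtype T y m :
  closure (@cell R n k T) y -> T m \subset vtype k y m.
Proof.
move=> Ty; have [x /= xT] : @cell R n k T !=set0.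
  by apply/set0P/negP => /eqP T0; move: Ty; rewrite T0 closure0.
apply/fintype.subsetP => I ITm; have := ITm; rewrite -xT in_vtype => /andP[cI _].
rewrite ffunE !inE cI; apply: (closure_in_sector _ Ty) => z /= zT.
by move: ITm; rewrite -zT ffunE inE => /andP[].
Qed.
End Types.

Section Draws.
Local Open Scope set_scope.

Lemma card_draws_containing (T : finType) (C : {set T}) m k : m \in C -> (0 < k)%N ->
  #|[set I : {set T} | [&& I \subset C, m \in I & #|I| == k]]| = 'C(#|C|.-1, k.-1).
Proof.
move=> mC k0; have cCm : #|C :\ m| = #|C|.-1 by rewrite (cardsD1 m C) mC.
rewrite -cCm -cards_draws.
set D := [set J : {set T} | J \subset C :\ m & #|J| == k.-1].
have mD J : J \in D -> m \notin J.
  by rewrite inE => /andP[/fintype.subsetP JC _]; apply/negP => /JC; rewrite !inE eqxx.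
have -> : [set I : {set T} | [&& I \subset C, m \in I & #|I| == k]] = [set m |: J | J in D].
  apply/setP => I; rewrite inE; apply/idP/imsetP => [/and3P[IC mI /eqP cI]|[J JD ->]].
    exists (I :\ m); last by rewrite finset.setD1K.
    by rewrite !inE finset.setSD //= (cardsD1 m I) mI in cI *; rewrite -cI.
  move: (JD) (mD J JD); rewrite inE => /andP[JC /eqP cJ] mJ.
  rewrite setU11 cardsU1 mJ cJ add1n (ltn_predK k0) eqxx andbT /=.
  by rewrite finset.subUset finset.sub1set mC (fintype.subset_trans JC) ?finset.subD1set.
rewrite card_in_imset // => J1 J2 /mD m1 /mD m2 e.
by rewrite -(finset.setU1K m1) -(finset.setU1K m2) e.
Qed.
End Draws.

Lemma tuple_alpha_minn n k a : (1 < k)%N ->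
  tuple_alpha n k a = tuple_alpha n k (minn a (n.+1 - k)).
Proof.
move=> k1; apply/ffunP => -[i i_n]; rewrite !ffunE /=.
case: (leqP a (n.+1 - k)) => // lt_a.
case: eqP => _.
  by rewrite (@bin_small (n - a)) ?(@bin_small (n - (n.+1 - k))) //; lia.
case: (ltnP i (n.+1 - k)) => i_lt; first by have -> : (i < a)%N by lia.
by case: ltnP => // _; rewrite bin_small //; lia.
Qed.

Section Generic.
Local Open Scope set_scope.
Variables (R : realType) (d k : nat).
Local Notation n := d.+1.
Implicit Types (x y : 'rV[R]_n) (I : {set 'I_n}).

(* No ties between coordinates of x + e_I, whatever the set I. *)
Definition generic x := forall i j : 'I_n, i != j ->
  (x ord0 i != x ord0 j) && (x ord0 i - x ord0 j != 1).

Definition top x : 'I_n := [arg max_(i > ord0) x ord0 i]%O.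

Lemma top_max x i : x ord0 i <= x ord0 (top x).
Proof. by rewrite /top; case: arg_maxP => // t _; apply. Qed.

Definition near_top x := [set j | x ord0 (top x) < x ord0 j + 1].
Definition above x m := [set j | x ord0 m < x ord0 j].

Lemma top_near_top x : top x \in near_top x.
Proof. by rewrite inE ltrDl. Qed.

Lemma argmax_addeI_generic x I m : generic x ->
  [forall i, addeI I x i <= addeI I x m] =
  (m \in I) && (m \in near_top x) && (I \subset ~: above x m) ||
  (m == top x) && (I \subset ~: near_top x).
Proof.
move=> gx; set t := top x; have tmax := top_max x.
have addeI_in i : i \in I -> addeI I x i = x ord0 i + 1 by rewrite /addeI => ->.
have addeI_out i : i \notin I -> addeI I x i = x ord0 i.
  by rewrite /addeI => /negbTE ->; rewrite addr0.
have le_addeI i : x ord0 i <= addeI I x i by rewrite /addeI lerDl; case: (i \in I).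
have mtop : (m \in near_top x) = (x ord0 t < x ord0 m + 1) by rewrite inE.
apply/forallP/idP => [mmax|].
- have tm := mmax t; case: (boolP (m \in I)) => mI /=.
  + rewrite (addeI_in _ mI) in tm; have -> /= : m \in near_top x.
      rewrite mtop; have [<-|/gx/andP[_ ne1]] := eqVneq t m; first by rewrite ltrDl.
      rewrite lt_neqAle; apply/andP; split; last by have := le_addeI t; lra.
      by apply: contra ne1 => /eqP->; rewrite addrAC subrr add0r.
    apply/orP; left; apply/fintype.subsetP => j jI; rewrite !inE -leNgt.
    by have := mmax j; rewrite (addeI_in _ mI) (addeI_in _ jI) lerD2r.
  + rewrite (addeI_out _ mI) in tm; have mt : m = t.
      have [//|/gx/andP[ne _]] := eqVneq m t.
      by rewrite eq_le tmax (le_trans (le_addeI t) tm) in ne.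
    rewrite mt eqxx; apply/fintype.subsetP => j jI; rewrite !inE -leNgt.
    by have := mmax j; rewrite (addeI_in _ jI) (addeI_out _ mI) mt.
- case/orP => [/andP[/andP[mI mA] sub]|/andP[/eqP mt sub]] i.
  + rewrite (addeI_in _ mI); move: mA; rewrite mtop => mA.
    have [iI|iI] := boolP (i \in I); last by rewrite addeI_out //; have := tmax i; lra.
    by rewrite addeI_in // lerD2r; have := fintype.subsetP sub _ iI; rewrite !inE -leNgt.
  + have tI : t \notin I.
      by apply/negP => /(fintype.subsetP sub); rewrite inE top_near_top.
    rewrite mt (addeI_out _ tI); have [iI|iI] := boolP (i \in I); last by rewrite addeI_out.
    by rewrite addeI_in //; have := fintype.subsetP sub _ iI; rewrite !inE -leNgt.
Qed.

Lemma vtype_genericE x m : generic x ->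
  vtype k x m = [set I : {set 'I_n} | (#|I| == k) &&
    ((m \in I) && (m \in near_top x) && (I \subset ~: above x m) ||
     (m == top x) && (I \subset ~: near_top x))].
Proof. by move=> gx; apply/setP => I; rewrite in_vtype inE argmax_addeI_generic. Qed.

Lemma cardsC_ord (A : {set 'I_n}) : #|~: A| = (n - #|A|)%N.
Proof. by have := cardsC A; rewrite card_ord; lia. Qed.

Lemma card_vtype_top x : generic x -> (0 < k)%N ->
  #|vtype k x (top x)| = ('C(n - #|near_top x|, k) + 'C(n.-1, k.-1))%N.
Proof.
move=> gx k0; have above_top : above x (top x) = finset.set0.
  by apply/setP => j; rewrite !inE ltNge top_max.
have -> : vtype k x (top x) =
    [set I : {set 'I_n} | [&& I \subset [set: 'I_n], top x \in I & #|I| == k]] :|: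
    [set I : {set 'I_n} | I \subset ~: near_top x & #|I| == k].
  apply/setP => I; rewrite vtype_genericE // above_top finset.setC0 top_near_top eqxx.
  by rewrite !inE finset.subsetT; case: (#|I| == k); rewrite /= ?andbT ?andbF.
rewrite cardsU disjoint_setI0 ?cards0 ?subn0.
  by rewrite card_draws_containing ?inE // cards_draws cardsT card_ord cardsC_ord addnC.
apply/pred0P => I; rewrite !inE; apply/negP => /andP[/and3P[_ tI _] /andP[sub _]].
by have := fintype.subsetP sub _ tI; rewrite inE top_near_top.
Qed.

Lemma top_above x m : generic x -> m != top x -> top x \in above x m.
Proof. by move=> gx /gx/andP[ne _]; rewrite inE lt_neqAle top_max andbT. Qed.

Lemma card_vtype_near_top x m : generic x -> (0 < k)%N ->
  m \in near_top x -> m != top x ->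
  #|vtype k x m| = 'C(n.-1 - #|above x m|, k.-1).
Proof.
move=> gx k0 mA mt.
have -> : vtype k x m =
    [set I : {set 'I_n} | [&& I \subset ~: above x m, m \in I & #|I| == k]].
  apply/setP => I; rewrite vtype_genericE // mA (negbTE mt) !inE andbT orbF.
  by case: (#|I| == k); case: (m \in I); rewrite /= ?andbT ?andbF.
by rewrite card_draws_containing ?inE ?ltxx // cardsC_ord -!subn1 -!subnDA addnC.
Qed.

Lemma vtype_far_from_top x m : generic x -> m \notin near_top x ->
  vtype k x m = finset.set0.
Proof.
move=> gx mA; have mt : m != top x by apply: contraNneq mA => ->; apply: top_near_top.
by apply/setP => I; rewrite vtype_genericE // (negbTE mA) (negbTE mt) !inE !andbF.
Qed.

Lemma card_above_lt x m : (#|above x m| < n)%N.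
Proof.
rewrite -[X in (_ < X)%N]card_ord; apply/proper_card/properP.
by split; [apply/subset_predT | exists m; rewrite ?inE ?ltxx].
Qed.

Definition rank x m : 'I_n := Ordinal (card_above_lt x m).

Lemma card_vtype_generic x m : generic x -> (0 < k)%N ->
  #|vtype k x m| = tuple_alpha n k #|near_top x| (rank x m).
Proof.
move=> gx k0; rewrite /tuple_alpha [in RHS]ffunE /=.
have [->|mt] := eqVneq m (top x).
  have -> : above x (top x) = finset.set0 by apply/setP => j; rewrite !inE ltNge top_max.
  by rewrite cards0 card_vtype_top.
have -> /= : (#|above x m| == 0%N) = false.
  by apply/negbTE; rewrite -lt0n; apply/card_gt0P; exists (top x); apply: top_above.
have [mA|mA] := boolP (m \in near_top x).
  have -> : (#|above x m| < #|near_top x|)%N.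
    apply/proper_card/properP; split; last by exists m => //; rewrite inE ltxx.
    apply/fintype.subsetP => j; rewrite !inE => mj; move: mA; rewrite inE; lra.
  by rewrite card_vtype_near_top.
rewrite vtype_far_from_top // cards0; case: ltnP => // lt_above.
suff : (#|near_top x| <= #|above x m|)%N by rewrite leqNgt lt_above.
apply/subset_leq_card/fintype.subsetP => j; rewrite !inE; move: mA; rewrite inE -leNgt; lra.
Qed.

Lemma rank_inj x : generic x -> injective (rank x).
Proof.
move=> gx i j /(congr1 val) /= eq_above; apply/eqP; apply: contraT => /gx/andP[ne _].
wlog lt_ij : i j eq_above ne / x ord0 i < x ord0 j.
  move=> W; have [lt|lt|eq_x] := ltgtP (x ord0 i) (x ord0 j).
  - exact: W lt.
  - by apply: (W j i) lt; rewrite // eq_sym.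
  - by rewrite eq_x eqxx in ne.
have : (#|above x j| < #|above x i|)%N.
  apply/proper_card/properP; split; last by exists j; rewrite !inE ?ltxx.
  by apply/fintype.subsetP => l; rewrite !inE => /(lt_trans lt_ij).
by rewrite eq_above ltnn.
Qed.

Lemma vtype_cover x I : #|I| = k -> exists m, I \in vtype k x m.
Proof.
move=> cI; exists [arg max_(i > ord0) addeI I x i]%O; rewrite in_vtype cI eqxx /=.
by case: arg_maxP => // m _ mmax; apply/forallP => i; apply: mmax.
Qed.

Lemma vtype_generic_uniq x I m m' : generic x ->
  I \in vtype k x m -> I \in vtype k x m' -> m = m'.
Proof.
rewrite !in_vtype => gx /andP[_ /forallP mmax] /andP[_ /forallP m'max].
apply/eqP; apply: contraT => /[dup] /gx/andP[ne ne1].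
rewrite eq_sym => /gx/andP[_ ne1']; move: (mmax m') (m'max m).
rewrite /addeI; case: (m \in I); case: (m' \in I) => /= le1 le2.
- have e : x ord0 m = x ord0 m' by lra.
  by rewrite e eqxx in ne.
- have e : x ord0 m' - x ord0 m = 1 by lra.
  by rewrite e eqxx in ne1'.
- have e : x ord0 m - x ord0 m' = 1 by lra.
  by rewrite e eqxx in ne1.
- have e : x ord0 m = x ord0 m' by lra.
  by rewrite e eqxx in ne.
Qed.

Definition ramp : 'rV[R]_n := \row_j (j%:R).

Lemma near_generic_ramp x : \forall e \near 0^'+, generic (x + e *: ramp).
Proof.
have : \forall e \near 0^'+, forall p : 'I_n * 'I_n, p.1 != p.2 ->
    (x ord0 p.1 - x ord0 p.2 + e * (p.1%:R - p.2%:R) != 0) &&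
    (x ord0 p.1 - x ord0 p.2 + e * (p.1%:R - p.2%:R) != 1).
  apply: filter_forall => -[i j] /=; have [<-|ij] := eqVneq i j.
    by apply: nearW.
  have ij0 : (i%:R - j%:R : R) != 0 by rewrite subr_eq0 eqr_nat.
  by apply: filterS (filterI (near_perturb_neq (x ord0 i - x ord0 j) 0 ij0)
                              (near_perturb_neq (x ord0 i - x ord0 j) 1 ij0)) => e [-> ->].
apply: filterS => e gen i j /(gen (i, j)) /= /andP[ne0 ne1]; rewrite !mxE.
have -> : x ord0 i + e * i%:R - (x ord0 j + e * j%:R) =
          x ord0 i - x ord0 j + e * (i%:R - j%:R) by ring.
rewrite ne1 andbT; apply: contra ne0 => /eqP eq_ij; apply/eqP.
by rewrite mulrBr addrACA -opprD eq_ij subrr.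
Qed.

Lemma generic_vtype_eq T y : generic y -> @cell R n k T !=set0 ->
  (forall m, T m \subset vtype k y m) -> T = vtype k y.
Proof.
move=> gy [z /= zT] Tsub; apply/ffunP => m; apply/eqP; rewrite finset.eqEsubset Tsub /=.
apply/fintype.subsetP => I Iy; have := Iy; rewrite in_vtype => /andP[/eqP cI _].
have [m' Im'] := vtype_cover z cI; rewrite zT in Im'.
by rewrite (vtype_generic_uniq gy Iy (fintype.subsetP (Tsub m') _ Im')).
Qed.

Lemma maximal_cell_generic T : is_maximal_cell k (closure (@cell R n k T)) ->
  @cell R n k T !=set0 -> exists2 y, generic y & T = vtype k y.
Proof.
move=> [_ maxT] Tne; have [x0 /= x0T] := Tne.
have [e [y_ref y_gen]] :=
  filter_ex (filterI (near_vtype_perturb k x0 ramp) (near_generic_ramp x0)).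
set y := x0 + e *: ramp in y_ref y_gen; exists y => //.
apply: generic_vtype_eq => // m; apply: closure_cell_vtype.
suff -> : closure (@cell R n k T) = closure (@cell R n k (vtype k y)).
  exact: subset_closure.
apply: maxT; first by exists (vtype k y); split => //; exists y.
rewrite [X in _ `<=` X](closure_id _).1; last exact: closed_closure.
apply: closureS.
by rewrite y_ref x0T; apply: cell_subset_closure_refine.
Qed.

Lemma maximal_cell_vtype_generic x : generic x ->
  is_maximal_cell k (closure (@cell R n k (vtype k x))).
Proof.
move=> gx; split; first by exists (vtype k x); split => //; exists x.
move=> _ [T [Tne ->]] sub; suff -> : T = vtype k x by [].
apply: generic_vtype_eq => // m; apply/closure_cell_vtype/sub.
exact: subset_closure.
Qed.

Lemma coarse_vtype_generic x : (1 < k)%N -> (k <= n)%N -> generic x ->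
  exists a, [/\ (1 <= a)%N, (a <= n.+1 - k)%N &
    exists s : 'S_n, coarse (vtype k x) = [ffun i => tuple_alpha n k a (s i)]].
Proof.
move=> k1 kn gx; exists (minn #|near_top x| (n.+1 - k)); split.
- rewrite leq_min (subn_gt0 k n.+1) ltnS kn andbT.
  by apply/card_gt0P; exists (top x); apply: top_near_top.
- exact: geq_minr.
- exists (perm (rank_inj gx)); apply/ffunP => m.
  by rewrite [LHS]ffunE [RHS]ffunE permE card_vtype_generic ?(ltnW k1) // -tuple_alpha_minn.
Qed.
End Generic.

Lemma card_perm_lt (n b : nat) (s : 'S_n) : (b <= n)%N ->
  #|[set j | (s j < b)%N]%SET| = b.
Proof.
move=> bn; have widen_inj : injective (widen_ord bn).
  by move=> i j /(congr1 val) /= /val_inj.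
rewrite -[RHS]card_ord -(card_imset _ widen_inj) -[RHS](card_preimset _ (@perm_inj _ s)).
apply: eq_card => j; rewrite !inE; apply/idP/imsetP => [sj|[i _ ->]]; last exact: (ltn_ord i).
by exists (Ordinal sj); last exact: val_inj.
Qed.

Section Staircase.
Variables (R : realType) (d k a : nat) (s : 'S_d.+1).
Local Notation n := d.+1.
Hypotheses (a_gt0 : (0 < a)%N) (a_le : (a <= n)%N).

(* Heights decrease with the rank r, and exactly the ranks r < a stay within 1 of the top. *)
Definition step (r : nat) : R := - (r%:R / n%:R) - if (a <= r)%N then 3 else 0.

Definition staircase : 'rV[R]_n := \row_m step (s m).

Lemma frac_ge0 r : 0 <= r%:R / n%:R :> R.
Proof. by rewrite divr_ge0. Qed.

Lemma frac_lt1 r : (r < n)%N -> r%:R / n%:R < 1 :> R.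
Proof. by move=> rn; rewrite ltr_pdivrMr ?mul1r ?ltr_nat ?ltr0n. Qed.

Lemma frac_lt r r' : (r < r')%N -> r%:R / n%:R < r'%:R / n%:R :> R.
Proof. by move=> rr'; rewrite ltr_pM2r ?ltr_nat ?invr_gt0 ?ltr0n. Qed.

Lemma step_lt r r' : (r < n)%N -> (r' < n)%N -> (step r < step r') = (r' < r)%N.
Proof.
move=> rn r'n; have [r'r|rr'|<-] := ltngtP r' r; last by rewrite ltxx.
- have := frac_lt r'r; have := frac_lt1 rn; have := frac_ge0 r'; rewrite /step.
  set fr := r%:R / n%:R; set fr' := r'%:R / n%:R.
  by case: (leqP a r); case: (leqP a r') => ar' ar /= *; first [lia | lra].
- have := frac_lt rr'; have := frac_lt1 r'n; have := frac_ge0 r; rewrite /step.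
  set fr := r%:R / n%:R; set fr' := r'%:R / n%:R.
  move=> *; apply/negbTE; rewrite -leNgt.
  by case: (leqP a r); case: (leqP a r') => ar' ar /=; first [lia | lra].
Qed.

Lemma step_sub_neq1 r r' : (r < n)%N -> (r' < n)%N -> step r - step r' != 1.
Proof.
move=> rn r'n; have := frac_lt1 rn; have := frac_lt1 r'n.
have := frac_ge0 r; have := frac_ge0 r'; rewrite /step.
set fr := r%:R / n%:R; set fr' := r'%:R / n%:R => *.
apply/eqP; case: (a <= r)%N; case: (a <= r')%N; lra.
Qed.

Lemma generic_staircase : generic staircase.
Proof.
move=> i j ij; rewrite !mxE step_sub_neq1 ?ltn_ord // andbT.
have sij : s i != s j by rewrite (inj_eq perm_inj).
by rewrite neq_lt !step_lt ?ltn_ord // orbC -neq_ltn.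
Qed.

Lemma step0 : step 0 = 0.
Proof. by rewrite /step mul0r oppr0 leqNgt a_gt0 subr0. Qed.

Lemma step_le0 r : step r <= 0.
Proof. by rewrite /step; have := frac_ge0 r; set f := r%:R / _; case: (a <= r)%N; lra. Qed.

Lemma top_staircase : staircase ord0 (top staircase) = 0.
Proof.
have := top_max staircase (s^-1 ord0)%g; rewrite !mxE permKV step0 => ge0.
by apply/le_anti; rewrite ge0 step_le0.
Qed.

Lemma card_near_top_staircase : #|near_top staircase| = a.
Proof.
rewrite -(card_perm_lt s a_le); apply: eq_card => j; rewrite !inE top_staircase mxE.
rewrite /step; have := frac_ge0 (s j); have := frac_lt1 (ltn_ord (s j)).
set f := (s j)%:R / _; case: leqP => _ f1 f0; last lra.
by apply/negbTE; rewrite -leNgt; lra.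
Qed.

Lemma rank_staircase m : rank staircase m = s m.
Proof.
apply: val_inj => /=; rewrite -[RHS](card_perm_lt s (ltnW (ltn_ord (s m)))).
by apply: eq_card => j; rewrite !inE !mxE step_lt.
Qed.

Lemma coarse_vtype_staircase : (0 < k)%N ->
  coarse (vtype k staircase) = [ffun i => tuple_alpha n k a (s i)].
Proof.
move=> k0; apply/ffunP => m; rewrite [LHS]ffunE [RHS]ffunE.
rewrite card_vtype_generic ?card_near_top_staircase ?rank_staircase //.
exact: generic_staircase.
Qed.
End Staircase.

Theorem mainTheorem4 (R : realType) (d k : nat) (hk2 : (2 <= k)%N) (hkd : (k < d.+1)%N)
  (c : {ffun 'I_d.+1 -> nat}) :
  (exists C : set 'rV[R]_d.+1,
      is_maximal_cell k C /\
      exists T, C = closure (@cell R d.+1 k T) /\ @cell R d.+1 k T !=set0 /\ c = coarse T)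
  <->
  (exists a : nat, [/\ (1 <= a)%N, (a <= d.+2 - k)%N &
      exists s : 'S_d.+1, c = [ffun i => tuple_alpha d.+1 k a (s i)]]).
Proof.
split.
- move=> [C [maxC [T [CT [Tne ->]]]]]; rewrite CT in maxC.
  have [y gy ->] := maximal_cell_generic maxC Tne.
  exact: coarse_vtype_generic hk2 (ltnW hkd) gy.
- move=> [a [a_gt0 a_le [s ->]]]; have a_le_n : (a <= d.+1)%N by lia.
  set x := staircase R a s; have gx : generic x by apply: generic_staircase.
  exists (closure (@cell R d.+1 k (vtype k x))).
  split; first exact: maximal_cell_vtype_generic.
  exists (vtype k x); split=> //; split; first by exists x.
  by rewrite coarse_vtype_staircase // ltnW.
Qed.
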